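(* Let $1\le d_1\le d_2$, let $G=(V,E)$ be a finite connected undirected unweighted $(d_1,d_2)$-bidegreed graph with $n$ vertices, and let $\alpha=d_2/d_1$. Then for every $\lambda\in[0,1]$ and every initial mutant set $S_0\subseteq V$, the expected absorption time of the $\lambda$-mixed Moran process with fitness $r$ is at most $O_r(n^4\alpha^2)$ if $r\ne 1$ (i.e., at most $C_r n^4\alpha^2$ with $C_r$ depending only on $r$), and at most $O(n^4\alpha^4)$ if $r=1$.
   Context: A graph is $(d_1,d_2)$-bidegreed, $d_1\le d_2$, if every vertex has degree in $\{d_1,d_2\}$. The $\lambda$-mixed Moran process on a connected graph $G=(V,E)$ with $n=|V|\ge 2$: each vertex hosts a resident (fitness $1$) or mutant (fitness $r>0$); the state is the mutant set $S_t\subseteq V$. Each step, independently: with probability $\lambda$ a Birth-death step (a vertex $u$ chosen with probability proportional to fitness among all vertices; a uniformly random neighbor of $u$ takes $u$'s type); with probability $1-\lambda$ a death-Birth step (a uniformly random vertex $v$ dies; a neighbor $u$ of $v$ chosen with probability proportional to fitness among the neighbors of $v$; $v$ takes $u$'s type). The absorption time is the expected number of steps until $S_t\in\{\emptyset,V\}$. *)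

From HB Require Import structures.
From mathcomp Require Import all_boot all_order all_algebra.
From mathcomp Require Import reals.
Set Implicit Arguments. Unset Strict Implicit. Unset Printing Implicit Defensive.
Import Order.TTheory GRing.Theory Num.Theory.
Local Open Scope ring_scope.

Section Moran.
Variables (R : realType) (T : finType) (e : rel T).

Definition simple_graph := symmetric e /\ irreflexive e.
Definition connected_graph := forall x y : T, connect e x y.
Definition deg (v : T) : nat := #|[set w | e v w]|.
Definition bidegreed (d1 d2 : nat) := forall v : T, deg v = d1 \/ deg v = d2.

(* fitness of vertex v in state S (S = mutant set) *)
Definition fit (r : R) (S : {set T}) (v : T) : R := if v \in S then r else 1.

Definition take_type (S : {set T}) (u w : T) : {set T} :=
  if u \in S then w |: S else S :\ w.

(* expectation of g(S_{t+1}) given S_t = S, for one step of the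
   lambda-mixed Moran process with fitness r *)
Definition step_expect (r lam : R) (g : {set T} -> R) (S : {set T}) : R :=
  let F := \sum_(u : T) fit r S u in
  lam * (\sum_(u : T) \sum_(w : T | e u w)
            (fit r S u / F) * (1 / (deg u)%:R) * g (take_type S u w))
  + (1 - lam) * (\sum_(v : T) \sum_(u : T | e v u)
            (1 / #|T|%:R) * (fit r S u / \sum_(x : T | e v x) fit r S x)
              * g (take_type S u v)).

Definition absorbing (S : {set T}) : bool := (S == set0) || (S == setT).

(* trunc_time r lam k S = E[min(tau, k)] for the process started at S,
   where tau is the absorption time.  The expected absorption time is
   E[tau] = sup_k E[min(tau, k)] (monotone convergence). *)
Fixpoint trunc_time (r lam : R) (k : nat) (S : {set T}) : R :=
  match k with
  | 0%N => 0
  | k'.+1 => if absorbing S then 0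
             else 1 + step_expect r lam (trunc_time r lam k') S
  end.

End Moran.

From HB Require Import structures.
From mathcomp Require Import all_boot all_order all_algebra.
From mathcomp Require Import reals ring lra.
Set Implicit Arguments. Unset Strict Implicit. Unset Printing Implicit Defensive.
Import Order.TTheory GRing.Theory Num.Theory.
Local Open Scope ring_scope.

(* Weight each vertex by pi v = 1 / (lam deg v + (1 - lam) (d1 + d2 - deg v))
   and let psi S be the total weight of the mutants.  This weighting makes psi
   a martingale of the neutral process, and across every mutant-resident edge
   a higher (lower) mutant fitness only helps (hurts) the mutant side in both
   update rules, so psi is a submartingale for r >= 1 and a supermartingale for
   r <= 1.  Moreover psi stays in [0, n / d1], and before absorption some
   mutant-resident edge fires with probability at least 1 / ((r + 1) n^2) and
   moves psi by at least 1 / d2, so each step has conditional variance at least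
   s = 1 / ((r + 1) n^2 d2^2).  The usual quadratic potential for bounded
   submartingales then bounds the absorption time by
   4 (n / d1)^2 / s = 4 (r + 1) n^4 (d2 / d1)^2, for every r > 0. *)

Lemma ler_pdiv_cross (R : numFieldType) (a b c d : R) : 0 < a -> 0 < b ->
  (c / a <= d / b) = (c * b <= d * a).
Proof. by move=> a0 b0; rewrite ler_pdivlMr // mulrAC ler_pdivrMr. Qed.

Section ArcSum.
Variables (R : numDomainType) (T : finType) (e : rel T).
Hypothesis e_sym : symmetric e.

Definition arc_sum (f : T -> T -> R) : R := \sum_u \sum_(w | e u w) f u w.

Lemma eq_arc_sum f g : (forall u w, e u w -> f u w = g u w) -> arc_sum f = arc_sum g.
Proof. by move=> fg; apply: eq_bigr => u _; apply: eq_bigr => w; apply: fg. Qed.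

Lemma arc_sumD f g : arc_sum (fun u w => f u w + g u w) = arc_sum f + arc_sum g.
Proof. by rewrite /arc_sum -big_split; apply: eq_bigr => u _; rewrite big_split. Qed.

Lemma arc_sumZ c f : arc_sum (fun u w => c * f u w) = c * arc_sum f.
Proof. by rewrite /arc_sum mulr_sumr; apply: eq_bigr => u _; rewrite mulr_sumr. Qed.

Lemma arc_sumT f : arc_sum f = arc_sum (fun u w => f w u).
Proof.
rewrite /arc_sum; under eq_bigr do rewrite big_mkcond.
rewrite exchange_big; apply: eq_bigr => u _; rewrite [RHS]big_mkcond.
by apply: eq_bigr => w _; rewrite e_sym.
Qed.

Lemma arc_sum_pair f : arc_sum f *+ 2 = arc_sum (fun u w => f u w + f w u).
Proof. by rewrite arc_sumD -arc_sumT mulr2n. Qed.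

Lemma ler_arc_sum f g : (forall u w, e u w -> f u w <= g u w) ->
  arc_sum f <= arc_sum g.
Proof. by move=> fg; apply: ler_sum => u _; apply: ler_sum => w; apply: fg. Qed.

Lemma arc_sum_ge0 f : (forall u w, e u w -> 0 <= f u w) -> 0 <= arc_sum f.
Proof. by move=> f0; apply: sumr_ge0 => u _; apply: sumr_ge0 => w; apply: f0. Qed.

Lemma arc_sum_le0 f : (forall u w, e u w -> f u w <= 0) -> arc_sum f <= 0.
Proof. by move=> f0; apply: sumr_le0 => u _; apply: sumr_le0 => w; apply: f0. Qed.

Lemma ler_arc_sum_arc f a b : (forall u w, e u w -> 0 <= f u w) -> e a b ->
  f a b <= arc_sum f.
Proof.
move=> f0 eab; rewrite /arc_sum (bigD1 a) //= (bigD1 b) //= -addrA lerDl.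
apply: addr_ge0; first by apply: sumr_ge0 => w /andP[ew _]; apply: f0.
by apply: sumr_ge0 => u _; apply: sumr_ge0 => w; apply: f0.
Qed.

End ArcSum.

Section MoranStep.
Variables (R : realType) (T : finType) (e : rel T).
Hypothesis e_sym : symmetric e.
Variables (r lam : R).
Hypotheses (r_gt0 : 0 < r) (lam01 : 0 <= lam <= 1).
Hypothesis deg_gt0 : forall v, (0 < deg e v)%N.
Hypothesis n_gt0 : (0 < #|T|)%N.

Local Notation arc_sum := (arc_sum e).
Local Notation n := (#|T|%:R : R).
Local Notation dg v := ((deg e v)%:R : R).

Definition total_fit (S : {set T}) : R := \sum_u fit r S u.
Definition nbr_fit (S : {set T}) v : R := \sum_(x | e v x) fit r S x.

Definition trans_prob (S : {set T}) u w : R :=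
  lam * (fit r S u / total_fit S * (1 / dg u))
  + (1 - lam) * (1 / n * (fit r S u / nbr_fit S w)).

Lemma step_expectE g S :
  step_expect e r lam g S = arc_sum (fun u w => trans_prob S u w * g (take_type S u w)).
Proof.
rewrite (eq_arc_sum (g := fun u w =>
  lam * (fit r S u / total_fit S * (1 / dg u) * g (take_type S u w))
  + (1 - lam) * (1 / n * (fit r S u / nbr_fit S w) * g (take_type S u w)))).
  by rewrite arc_sumD !arc_sumZ [X in _ + _ * X = _]arc_sumT.
by move=> u w _; rewrite /trans_prob; ring.
Qed.

Lemma fit_gt0 (S : {set T}) v : 0 < fit r S v.
Proof. by rewrite /fit; case: ifP. Qed.

Lemma sum_nbr_const (c : R) v : \sum_(w | e v w) c = dg v * c.
Proof. by rewrite sumr_const /deg cardsE mulr_natl. Qed.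

Lemma total_fit_bounds (lo hi : R) S : (forall v, lo <= fit r S v <= hi) ->
  n * lo <= total_fit S <= n * hi.
Proof.
have sum_const (c : R) : \sum_(v : T) c = n * c.
  by rewrite sumr_const cardT -cardE mulr_natl.
move=> fS; rewrite -!sum_const.
by apply/andP; split; apply: ler_sum => v _; case/andP: (fS v).
Qed.

Lemma nbr_fit_bounds (lo hi : R) S v : (forall v, lo <= fit r S v <= hi) ->
  dg v * lo <= nbr_fit S v <= dg v * hi.
Proof.
move=> fS; rewrite -!sum_nbr_const.
by apply/andP; split; apply: ler_sum => x _; case/andP: (fS x).
Qed.

Lemma total_fit_gt0 S : 0 < total_fit S.
Proof.
have [x _] := card_gt0P n_gt0.
rewrite /total_fit (bigD1 x) //= ltr_wpDr ?fit_gt0 //.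
by apply: sumr_ge0 => v _; apply/ltW/fit_gt0.
Qed.

Lemma nbr_fit_gt0 S v : 0 < nbr_fit S v.
Proof.
have := deg_gt0 v; rewrite /deg card_gt0 => /set0Pn[x]; rewrite inE => evx.
rewrite /nbr_fit (bigD1 x) //= ltr_wpDr ?fit_gt0 //.
by apply: sumr_ge0 => w _; apply/ltW/fit_gt0.
Qed.

Lemma dg_gt0 v : 0 < dg v.
Proof. by rewrite ltr0n. Qed.

Lemma n_gt0R : 0 < n.
Proof. by rewrite ltr0n. Qed.

Lemma trans_prob_ge0 S u w : 0 <= trans_prob S u w.
Proof.
have [l0 l1] := andP lam01.
have := total_fit_gt0 S; have := nbr_fit_gt0 S w; have := fit_gt0 S u.
have := dg_gt0 u; have := n_gt0R => *.
by apply: addr_ge0; apply: mulr_ge0; rewrite ?subr_ge0 //; apply: mulr_ge0;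
  rewrite divr_ge0 ?ltW.
Qed.

Lemma arc_sum_trans_prob S : arc_sum (trans_prob S) = 1.
Proof.
rewrite arc_sumD !arc_sumZ.
have -> : arc_sum (fun u w => fit r S u / total_fit S * (1 / dg u)) = 1.
  rewrite /arc_sum (eq_bigr (fun u => fit r S u / total_fit S)).
    by rewrite -mulr_suml mulfV // gt_eqF ?total_fit_gt0.
  by move=> u _; rewrite sum_nbr_const mulrCA mul1r mulfV ?mulr1 // gt_eqF ?dg_gt0.
rewrite [X in _ + _ * (_ * X)]arc_sumT //.
have -> : arc_sum (fun w u => fit r S u / nbr_fit S w) = n.
  rewrite /arc_sum (eq_bigr (fun _ => 1)) => [|w _].
    by rewrite sumr_const cardT -cardE.
  by rewrite -mulr_suml mulfV // gt_eqF ?nbr_fit_gt0.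
by rewrite div1r mulVf ?gt_eqF ?n_gt0R // !mulr1 addrC subrK.
Qed.

Definition drift (y : {set T} -> R) S : R :=
  arc_sum (fun u w => trans_prob S u w * (y (take_type S u w) - y S)).
Definition sq_increment (y : {set T} -> R) S : R :=
  arc_sum (fun u w => trans_prob S u w * (y (take_type S u w) - y S) ^+ 2).

Lemma drift_subl c y S : drift (fun S => c - y S) S = - drift y S.
Proof.
rewrite /drift -[RHS]mulN1r -arc_sumZ; apply: eq_arc_sum => u w _; ring.
Qed.

Lemma sq_increment_subl c y S : sq_increment (fun S => c - y S) S = sq_increment y S.
Proof. by apply: eq_arc_sum => u w _; congr (_ * _); ring. Qed.

Section Potential.
Variables (y : {set T} -> R) (M s : R).
Hypothesis s_gt0 : 0 < s.
Hypothesis y_bounds : forall S, 0 <= y S <= M.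
Hypothesis drift_y_ge0 : forall S, ~~ absorbing S -> 0 <= drift y S.
Hypothesis sq_increment_y_ge : forall S, ~~ absorbing S -> s <= sq_increment y S.

(* [4 M^2 - (y + M)^2] is concave and decreasing on [0, M], so along a
   submartingale with increments of mean square at least [s] it drops by at
   least [s] per step. *)
Let potential S := (4 * M ^+ 2 - (y S + M) ^+ 2) / s.

Lemma potential_ge0 S : 0 <= potential S.
Proof.
have [y0 yM] := andP (y_bounds S).
apply: divr_ge0; last exact: ltW.
have -> : 4 * M ^+ 2 = (2 * M) ^+ 2 by ring.
by rewrite subr_ge0 ler_sqr ?nnegrE; lra.
Qed.

Lemma potential_step S : ~~ absorbing S ->
  1 + arc_sum (fun u w => trans_prob S u w * potential (take_type S u w)) <= potential S.
Proof.
move=> S_live; have [y0 yM] := andP (y_bounds S).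
rewrite (eq_arc_sum (g := fun u w => potential S * trans_prob S u w
    + (- (2 * (y S + M) / s)) * (trans_prob S u w * (y (take_type S u w) - y S))
    + (- (1 / s)) * (trans_prob S u w * (y (take_type S u w) - y S) ^+ 2))); last first.
  by move=> u w _; rewrite /potential; ring.
rewrite !arc_sumD !arc_sumZ arc_sum_trans_prob mulr1.
have drift_term : 0 <= 2 * (y S + M) / s * drift y S.
  apply: mulr_ge0; last exact: drift_y_ge0.
  by apply: divr_ge0; [lra | exact: ltW].
have var_term : 1 <= 1 / s * sq_increment y S.
  by rewrite mul1r ler_pdivlMl // mulr1 sq_increment_y_ge.
rewrite /drift /sq_increment in drift_term var_term; lra.
Qed.

Lemma trunc_time_le_potential k S : trunc_time e r lam k S <= potential S.
Proof.
elim: k S => [|k IHk] S /=; first exact: potential_ge0.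
case: ifPn => [_|S_live]; first exact: potential_ge0.
apply: le_trans (potential_step S_live); rewrite step_expectE lerD2l.
by apply: ler_arc_sum => u w _; rewrite ler_wpM2l ?trans_prob_ge0.
Qed.

Lemma trunc_time_le k S : trunc_time e r lam k S <= 4 * M ^+ 2 / s.
Proof.
apply: le_trans (trunc_time_le_potential k S) _.
apply: ler_wpM2r; first by rewrite invr_ge0 ltW.
by rewrite gerBl sqr_ge0.
Qed.

End Potential.

Lemma dg_le_n v : dg v <= n.
Proof. by rewrite ler_nat /deg max_card. Qed.

Lemma trans_prob_ge S u w : fit r S u / ((r + 1) * n ^+ 2) <= trans_prob S u w.
Proof.
have [l0 l1] := andP lam01.
have fit_le (S' : {set T}) v : 0 <= fit r S' v <= r + 1.
  by rewrite /fit; case: ifP => _; rewrite ?lerDl ?lerDr ?ltW ?ler01.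
have ge_fit_div X : 0 < X -> X <= (r + 1) * n ^+ 2 ->
    fit r S u / ((r + 1) * n ^+ 2) <= fit r S u / X.
  move=> X0 Xle; rewrite ler_wpM2l ?(ltW (fit_gt0 _ _)) // lef_pV2 ?posrE //.
  by apply: lt_le_trans Xle.
have [_ F_le] := andP (total_fit_bounds (fit_le S)).
have [_ D_le] := andP (nbr_fit_bounds w (fit_le S)).
have Bd : fit r S u / ((r + 1) * n ^+ 2) <= fit r S u / total_fit S * (1 / dg u).
  rewrite mulf_div mulr1; apply: ge_fit_div.
    by rewrite mulr_gt0 ?total_fit_gt0 ?dg_gt0.
  rewrite expr2 mulrA; apply: ler_pM;
    rewrite ?(ltW (total_fit_gt0 _)) ?(ltW (dg_gt0 _)) ?dg_le_n //.
  by rewrite mulrC.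
have dB : fit r S u / ((r + 1) * n ^+ 2) <= 1 / n * (fit r S u / nbr_fit S w).
  rewrite mulf_div mul1r; apply: ge_fit_div.
    by rewrite mulr_gt0 ?n_gt0R ?nbr_fit_gt0.
  rewrite expr2 mulrCA ler_pM2l ?n_gt0R //; apply: le_trans D_le _.
  by rewrite mulrC ler_wpM2l ?dg_le_n ?addr_ge0 ?ltW.
have := ler_wpM2l l0 Bd; have : 0 <= 1 - lam by lra.
by move=> l2; have := ler_wpM2l l2 dB; rewrite /trans_prob; lra.
Qed.

Lemma exists_boundary_arc : connected_graph e -> forall S : {set T}, ~~ absorbing S ->
  exists a b, [/\ a \in S, b \notin S & e b a].
Proof.
move=> conn S; rewrite /absorbing negb_or => /andP[/set0Pn[x xS] /eqP S_ne].
have [y yS] : exists y, y \notin S.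
  case: (pickP [pred y | y \notin S]) => [y yS | all_S]; first by exists y.
  by case: S_ne; apply/setP => v; rewrite inE; apply/negbFE/all_S.
case: (boolP [exists a, exists b, [&& a \in S, b \notin S & e b a]]).
  by move=> /existsP[a /existsP[b /and3P[aS bS eba]]]; exists a, b.
move=> /existsPn no_arc.
have S_closed : closed e S.
  move=> u v euv; apply/idP/idP => [uS|vS]; apply: contraT => notS.
    by have /existsPn/(_ v) := no_arc u; rewrite uS notS e_sym euv.
  by have /existsPn/(_ u) := no_arc v; rewrite vS notS euv.
by have := closed_connect S_closed (conn x y); rewrite xS (negbTE yS).
Qed.

Section Bidegreed.
Variables (d1 d2 : nat).
Hypotheses (d1_gt0 : (0 < d1)%N) (d1_le_d2 : (d1 <= d2)%N).
Hypothesis bideg : bidegreed e d1 d2.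

Local Notation D1 := (d1%:R : R).
Local Notation D2 := (d2%:R : R).

(* [D1 + D2 - dg v] is the degree class other than that of [v]. *)
Definition pi v : R := (lam * dg v + (1 - lam) * (D1 + D2 - dg v))^-1.
Definition psi (S : {set T}) : R := \sum_(v in S) pi v.

Lemma dg_cases v : dg v = D1 \/ dg v = D2.
Proof. by case: (bideg v) => ->; [left | right]. Qed.

Lemma pi_bounds v : D2^-1 <= pi v <= D1^-1.
Proof.
have [l0 l1] := andP lam01.
have d10 : 0 < D1 by rewrite ltr0n.
have d12 : D1 <= D2 by rewrite ler_nat.
have q_bounds : D1 <= lam * dg v + (1 - lam) * (D1 + D2 - dg v) <= D2.
  by case: (dg_cases v) => ->; apply/andP; split; nra.
have [q1 q2] := andP q_bounds.
have q0 := lt_le_trans d10 q1.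
by rewrite /pi !lef_pV2 ?posrE ?q0 ?q1 ?q2 ?d10 ?(lt_le_trans d10 d12).
Qed.

Lemma pi_gt0 v : 0 < pi v.
Proof.
have [pi_ge _] := andP (pi_bounds v).
by apply: lt_le_trans pi_ge; rewrite invr_gt0 ltr0n (leq_trans d1_gt0).
Qed.

(* The neutral process leaves [psi] unchanged in expectation: for
   [deg u != deg w], [pi w * (lam / deg u + (1 - lam) / deg w) = 1 / (deg u * deg w)]
   is symmetric in [u] and [w]. *)
Lemma pi_balance u w :
  lam * (pi w / dg u - pi u / dg w) + (1 - lam) * (pi w / dg w - pi u / dg u) = 0.
Proof.
have [l0 l1] := andP lam01.
have d10 : 0 < D1 by rewrite ltr0n.
have d12 : D1 <= D2 by rewrite ler_nat.
have q1 : lam * D1 + (1 - lam) * (D1 + D2 - D1) != 0 by rewrite gt_eqF //; nra.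
have q2 : lam * D2 + (1 - lam) * (D1 + D2 - D2) != 0 by rewrite gt_eqF //; nra.
have d1_neq0 : D1 != 0 by rewrite gt_eqF.
have d2_neq0 : D2 != 0 by rewrite gt_eqF //; apply: lt_le_trans d12.
by rewrite /pi; case: (dg_cases u) => ->; case: (dg_cases w) => ->; field;
  rewrite ?q1 ?q2 ?d1_neq0 ?d2_neq0.
Qed.

Lemma psi_bounds S : 0 <= psi S <= n / D1.
Proof.
apply/andP; split; first by apply: sumr_ge0 => v _; apply/ltW/pi_gt0.
apply: le_trans (_ : \sum_(v in S) D1^-1 <= _).
  by apply: ler_sum => v _; case/andP: (pi_bounds v).
rewrite sumr_const -[X in X <= _]mulr_natl; apply: ler_wpM2r.
  by rewrite invr_ge0 ler0n.
by rewrite ler_nat max_card.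
Qed.

Lemma psi_take_type S u w : psi (take_type S u w) - psi S =
  if u \in S then (if w \in S then 0 else pi w) else (if w \in S then - pi w else 0).
Proof.
rewrite /take_type /psi; case: (u \in S); case: (boolP (w \in S)) => wS.
- by rewrite (setUidPr _) ?subrr ?sub1set.
- by rewrite big_setU1 //= addrK.
- by rewrite (big_setD1 w wS) /= opprD addrCA subrr addr0.
- by rewrite (setDidPl _) ?subrr // disjoint_sym disjoints1.
Qed.

Definition boundary_flow (S : {set T}) a b : R :=
  trans_prob S a b * pi b - trans_prob S b a * pi a.

Lemma boundary_flowE (S : {set T}) a b : a \in S -> b \notin S ->
  boundary_flow S a b =
  lam * (pi b / dg a * (r / total_fit S - 1 / n)
         + pi a / dg b * (1 / n - 1 / total_fit S))
  + (1 - lam) / n * ((r / nbr_fit S b - 1 / dg b) * pi b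
                     + (1 / dg a - 1 / nbr_fit S a) * pi a).
Proof.
move=> aS bS; have balance := pi_balance a b.
rewrite /boundary_flow /trans_prob /fit aS (negbTE bS).
by rewrite -[LHS]subr0 -(mulr0 (1 / n)) -balance; ring.
Qed.

Lemma boundary_flow_signed (S : {set T}) a b (s : R) : a \in S -> b \notin S ->
  0 <= s * (r / total_fit S - 1 / n) -> 0 <= s * (1 / n - 1 / total_fit S) ->
  0 <= s * (r / nbr_fit S b - 1 / dg b) -> 0 <= s * (1 / dg a - 1 / nbr_fit S a) ->
  0 <= s * boundary_flow S a b.
Proof.
move=> aS bS x1 x2 x3 x4; have [l0 l1] := andP lam01.
have pa := ltW (pi_gt0 a); have pb := ltW (pi_gt0 b).
have da := ltW (dg_gt0 a); have db := ltW (dg_gt0 b).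
rewrite boundary_flowE //.
set X1 := r / _ - _ in x1 *; set X2 := 1 / n - _ in x2 *.
set X3 := r / _ - _ in x3 *; set X4 := 1 / dg a - _ in x4 *.
have -> : s * (lam * (pi b / dg a * X1 + pi a / dg b * X2)
                + (1 - lam) / n * (X3 * pi b + X4 * pi a))
  = lam * (pi b / dg a * (s * X1) + pi a / dg b * (s * X2))
    + (1 - lam) / n * (s * X3 * pi b + s * X4 * pi a) by ring.
apply: addr_ge0; apply: mulr_ge0; rewrite ?divr_ge0 ?subr_ge0 ?(ltW n_gt0R) //.
  by apply: addr_ge0; apply: mulr_ge0; rewrite ?divr_ge0.
by apply: addr_ge0; apply: mulr_ge0.
Qed.

Lemma boundary_flow_ge0 (S : {set T}) a b : 1 <= r -> a \in S -> b \notin S ->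
  0 <= boundary_flow S a b.
Proof.
move=> r_ge1 aS bS; rewrite -[boundary_flow _ _ _]mul1r.
have fit_in v : 1 <= fit r S v <= r by rewrite /fit; case: ifP; rewrite lexx r_ge1.
have [F_ge F_le] := andP (total_fit_bounds fit_in).
have [Da_ge _] := andP (nbr_fit_bounds a fit_in).
have [_ Db_le] := andP (nbr_fit_bounds b fit_in).
apply: boundary_flow_signed; rewrite // mul1r subr_ge0 ler_pdiv_cross
  ?n_gt0R ?total_fit_gt0 ?nbr_fit_gt0 ?dg_gt0 // !mul1r.
- by rewrite mulrC.
- by rewrite mulr1 in F_ge.
- by rewrite mulrC.
- by rewrite mulr1 in Da_ge.
Qed.

Lemma boundary_flow_le0 (S : {set T}) a b : r <= 1 -> a \in S -> b \notin S ->
  boundary_flow S a b <= 0.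
Proof.
move=> r_le1 aS bS; rewrite -oppr_ge0 -mulN1r.
have fit_in v : r <= fit r S v <= 1 by rewrite /fit; case: ifP; rewrite lexx r_le1.
have [F_ge F_le] := andP (total_fit_bounds fit_in).
have [_ Da_le] := andP (nbr_fit_bounds a fit_in).
have [Db_ge _] := andP (nbr_fit_bounds b fit_in).
apply: boundary_flow_signed; rewrite // mulN1r oppr_ge0 subr_le0 ler_pdiv_cross
  ?n_gt0R ?total_fit_gt0 ?nbr_fit_gt0 ?dg_gt0 // !mul1r.
- by rewrite mulrC.
- by rewrite mulr1 in F_le.
- by rewrite mulrC.
- by rewrite mulr1 in Da_le.
Qed.

Lemma drift_psi_pair (S : {set T}) u w :
  trans_prob S u w * (psi (take_type S u w) - psi S)
  + trans_prob S w u * (psi (take_type S w u) - psi S) =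
  if u \in S then (if w \in S then 0 else boundary_flow S u w)
  else (if w \in S then boundary_flow S w u else 0).
Proof.
by rewrite !psi_take_type /boundary_flow; case: (u \in S); case: (w \in S); ring.
Qed.

Lemma drift_psi_ge0 S : 1 <= r -> 0 <= drift psi S.
Proof.
move=> r_ge1; rewrite -(pmulrn_lge0 _ (isT : (0 < 2)%N)) (arc_sum_pair e_sym).
apply: arc_sum_ge0 => u w _; rewrite drift_psi_pair.
by case: ifPn => uS; case: ifPn => wS; rewrite ?lexx ?boundary_flow_ge0.
Qed.

Lemma drift_psi_le0 S : r <= 1 -> drift psi S <= 0.
Proof.
move=> r_le1; rewrite -(pmulrn_lle0 _ (isT : (0 < 2)%N)) (arc_sum_pair e_sym).
apply: arc_sum_le0 => u w _; rewrite drift_psi_pair.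
by case: ifPn => uS; case: ifPn => wS; rewrite ?lexx ?boundary_flow_le0.
Qed.

Hypothesis conn : connected_graph e.

Lemma sq_increment_psi_ge S : ~~ absorbing S ->
  ((r + 1) * n ^+ 2 * D2 ^+ 2)^-1 <= sq_increment psi S.
Proof.
move=> S_live; have [a [b [aS bS eba]]] := exists_boundary_arc conn S_live.
apply: le_trans (ler_arc_sum_arc _ eba); last first.
  by move=> u w _; rewrite mulr_ge0 ?trans_prob_ge0 ?sqr_ge0.
rewrite /= psi_take_type (negbTE bS) aS sqrrN invfM.
have [pi_ge _] := andP (pi_bounds a).
have D2_ge0 : 0 <= D2^-1 by rewrite invr_ge0 ler0n.
apply: ler_pM; rewrite ?invr_ge0 ?mulr_ge0 ?exprn_ge0 ?ler0n //.
- by rewrite addr_ge0 ?ltW.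
- by have := trans_prob_ge S b a; rewrite /fit (negbTE bS) div1r.
- by rewrite -exprVn expr2 ler_pM.
Qed.

Lemma trunc_time_bidegreed_le k S :
  trunc_time e r lam k S <= 4 * (r + 1) * n ^+ 4 * (D2 / D1) ^+ 2.
Proof.
pose M := n / D1; pose s := ((r + 1) * n ^+ 2 * D2 ^+ 2)^-1.
have n0 := n_gt0R.
have D1_gt0 : 0 < D1 by rewrite ltr0n.
have D2_gt0 : 0 < D2 by rewrite ltr0n (leq_trans d1_gt0).
have r1_gt0 : 0 < r + 1 by rewrite addr_gt0.
have s_gt0 : 0 < s by rewrite invr_gt0 !pmulr_rgt0 ?exprn_gt0.
have -> : 4 * (r + 1) * n ^+ 4 * (D2 / D1) ^+ 2 = 4 * M ^+ 2 / s.
  by rewrite /M /s; field; rewrite !gt_eqF.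
have [r_le1 | r_gt1] := lerP r 1.
  apply: (@trunc_time_le (fun S => M - psi S)) => // [S'|S' S'_live|S' S'_live].
  - by have /andP[psi_ge0 ?] := psi_bounds S'; rewrite subr_ge0 gerBl psi_ge0 andbT.
  - by rewrite drift_subl oppr_ge0 drift_psi_le0.
  - by rewrite sq_increment_subl sq_increment_psi_ge.
apply: (@trunc_time_le psi) => // [|S' S'_live|S' S'_live].
- exact: psi_bounds.
- by rewrite drift_psi_ge0 // ltW.
- exact: sq_increment_psi_ge.
Qed.

End Bidegreed.
End MoranStep.

Lemma bidegreed_deg_gt0 (T : finType) (e : rel T) (d1 d2 : nat) :
  (0 < d1)%N -> (d1 <= d2)%N -> bidegreed e d1 d2 -> forall v, (0 < deg e v)%N.
Proof. by move=> d1_gt0 d12 bideg v; case: (bideg v) => ->; last exact: leq_trans d12. Qed.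

Theorem mainTheorem11 (R : realType) :
  (forall r : R, 0 < r -> r != 1 ->
    exists C : R, 0 < C /\
      forall (T : finType) (e : rel T) (d1 d2 : nat),
        simple_graph e -> connected_graph e -> (1 < #|T|)%N ->
        (1 <= d1)%N -> (d1 <= d2)%N -> bidegreed e d1 d2 ->
        forall (lam : R), 0 <= lam <= 1 ->
        forall (S0 : {set T}) (k : nat),
          trunc_time e r lam k S0
            <= C * (#|T|%:R) ^+ 4 * ((d2%:R / d1%:R) ^+ 2))
  /\
  (exists C : R, 0 < C /\
      forall (T : finType) (e : rel T) (d1 d2 : nat),
        simple_graph e -> connected_graph e -> (1 < #|T|)%N ->
        (1 <= d1)%N -> (d1 <= d2)%N -> bidegreed e d1 d2 ->
        forall (lam : R), 0 <= lam <= 1 ->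
        forall (S0 : {set T}) (k : nat),
          trunc_time e 1 lam k S0
            <= C * (#|T|%:R) ^+ 4 * ((d2%:R / d1%:R) ^+ 4)).
Proof.
split=> [r r_gt0 _ | ].
  exists (4 * (r + 1)); split; first by rewrite mulr_gt0 ?addr_gt0.
  move=> T e d1 d2 [e_sym _] conn n_gt1 d1_gt0 d12 bideg lam lam01 S0 k.
  apply: trunc_time_bidegreed_le => //; first exact: bidegreed_deg_gt0 bideg.
  exact: ltnW.
exists 8; split=> // T e d1 d2 [e_sym _] conn n_gt1 d1_gt0 d12 bideg lam lam01 S0 k.
apply: le_trans (trunc_time_bidegreed_le e_sym ltr01 lam01
  (bidegreed_deg_gt0 d1_gt0 d12 bideg) (ltnW n_gt1) d1_gt0 d12 bideg conn k S0) _.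
have alpha_ge1 : 1 <= d2%:R / d1%:R :> R.
  by rewrite ler_pdivlMr ?ltr0n // mul1r ler_nat.
rewrite (_ : 4 * (1 + 1) = 8 :> R); last by ring.
apply: ler_wpM2l; first by rewrite mulr_ge0 ?exprn_ge0 ?ler0n.
exact: ler_weXn2l.
Qed.
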